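(* Let $p$ be prime, $n\ge2$, and $G$ a profinite group. Then $$\bigcap_{s=1}^{n}T^{\bar{\mathbb{U}}_{n,s}}(G)=\bigcap_{s=1}^{n-1}T^{\mathbb{U}_{n-1,s}}(G).$$
   Context: For profinite groups $\mathbb{U}$ and $G$, $T^{\mathbb{U}}(G)$ denotes the intersection of the kernels of all continuous homomorphisms $G\to\mathbb{U}$. For a commutative ring $R$, $\mathbb{U}_s(R)$ is the group of unipotent upper-triangular $(s+1)\times(s+1)$ matrices over $R$. For $1\le s\le k$ put $\mathbb{U}_{k,s}=\mathbb{U}_s(\mathbb{Z}/p^{k-s+1})$, and let $\bar{\mathbb{U}}_{k,s}$ be the quotient of $\mathbb{U}_{k,s}$ by the central subgroup of order $p$ generated by $I+p^{k-s}E_{1,s+1}$. (E.g. $\mathbb{U}_{k,1}\cong\mathbb{Z}/p^k$, $\bar{\mathbb{U}}_{k,1}\cong\mathbb{Z}/p^{k-1}$, and $\mathbb{U}_{k,k}=\mathbb{U}_k(\mathbb{Z}/p)$.) *)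

From HB Require Import structures.
From mathcomp Require Import all_boot all_order all_algebra all_fingroup.
From mathcomp Require Import all_classical topology.
Set Implicit Arguments. Unset Strict Implicit. Unset Printing Implicit Defensive.
Import GRing.Theory.


Local Open Scope ring_scope.

Definition is_profinite_group (G : topologicalType)
    (mul : G -> G -> G) (inv : G -> G) (e : G) : Prop :=
  (forall x y z, mul x (mul y z) = mul (mul x y) z) /\
  (forall x, mul e x = x /\ mul x e = x) /\
  (forall x, mul (inv x) x = e /\ mul x (inv x) = e) /\
  continuous (fun xy : G * G => mul xy.1 xy.2) /\ continuous inv /\
  compact [set: G]%classic /\ hausdorff_space G /\
  totally_disconnected [set: G]%classic.

(* A continuous homomorphism from G into the finite group A (a subgroup of the
   finGroupType gT, carrying the discrete topology): multiplicative, values in A,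
   and preimages of points are open (= continuity into a discrete space). *)
Definition cont_hom (G : topologicalType) (mul : G -> G -> G)
    (gT : finGroupType) (A : {set gT}) (f : G -> gT) : Prop :=
  [/\ (forall x y, f (mul x y) = (f x * f y)%g),
      (forall x, f x \in A)
    & (forall u : gT, open (f @^-1` [set u])%classic)].

Definition Tker (G : topologicalType) (mul : G -> G -> G)
    (gT : finGroupType) (A : {set gT}) : set G :=
  [set x | forall f : G -> gT, cont_hom mul A f -> f x = 1%g]%classic.

(* U_s(Z/m) inside GL_{s+1}(Z/m): unipotent upper-triangular matrices. *)
Definition Unip (m s : nat) : {set {'GL_(s.+1)['Z_m]}} :=
  [set u : {'GL_(s.+1)['Z_m]} |
     [forall i : 'I_(s.+1), forall j : 'I_(s.+1),
        (GLval u i j == (i == j)%:R) || (i < j)%N]].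

(* For U_{k,s} = U_s(Z/p^(k-s+1)). *)
Definition Ukmod (p k s : nat) : nat := p ^ (k - s + 1).

Definition Ugrp (p k s : nat) : {set {'GL_(s.+1)['Z_(Ukmod p k s)]}} :=
  Unip (Ukmod p k s) s.

Definition Zsub (p k s : nat) : {set {'GL_(s.+1)['Z_(Ukmod p k s)]}} :=
  (<<[set u : {'GL_(s.+1)['Z_(Ukmod p k s)]} |
      GLval u == 1%:M + ((p ^ (k - s))%:R *: delta_mx ord0 ord_max)]>>)%g.

Definition Ubargrp (p k s : nat) : {set coset_of (Zsub p k s)} :=
  (Ugrp p k s / Zsub p k s)%g.

From HB Require Import structures.
From mathcomp Require Import all_boot all_order all_algebra all_fingroup.
From mathcomp Require Import all_classical topology.
From mathcomp Require Import zify.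
Set Implicit Arguments. Unset Strict Implicit. Unset Printing Implicit Defensive.
Import GRing.Theory.

(* The argument is purely about finite quotients of G.  Let Z_{n,s} be the central subgroup of U_{n,s} generated by
   I + p^(n-s) E_{1,s+1}.  For s >= 1 both U_{n,s+1} and U_{n-1,s} are groups
   of matrices over Z/p^(n-s).
   - (LHS in RHS) The corner embedding M |-> diag(1, M) maps U_{n-1,s}
     injectively into Ubar_{n,s+1}, and an injective homomorphism A -> B
     gives T^B(G) in T^A(G).
   - (RHS in LHS) Let f : G -> Ubar_{n,s+1} with f x = u Z.  Deleting the first
     row and column, deleting the last row and column (both onto U_{n-1,s},
     for s >= 1) and reducing mod p^(n-s-1) (onto U_{n-1,s+1}, for s < n-1)
     are homomorphisms killing Z, hence factor through Ubar_{n,s+1}; for x in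
     the right-hand side they are all trivial on u, and a unitriangular u
     killed by all three lies in Z, so f x = 1.
   The file develops, in order: reduction maps Z/a -> Z/b; how T^A behaves
   under homomorphisms; unitriangular matrices and the maps of GL groups they
   induce; row/column deletion and the corner embedding; the central
   elementary subgroup and factorisation through its quotient; the two
   inclusions; and finally the theorem. *)

Section ZpReduction.
Local Open Scope ring_scope.

Definition zred a b (x : 'Z_a) : 'Z_b := (nat_of_ord x)%:R.

Variables (a b : nat).
Hypotheses (a_gt1 : (1 < a)%N) (b_gt1 : (1 < b)%N) (b_dvd_a : (b %| a)%N).

Lemma zred_nat k : zred b (k%:R : 'Z_a) = k%:R.
Proof. by apply: ord_inj; rewrite /zred !val_Zp_nat // modn_dvdm. Qed.

Lemma zredD (x y : 'Z_a) : zred b (x + y) = zred b x + zred b y.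
Proof. by rewrite -[x]natr_Zp -[y]natr_Zp -natrD !zred_nat natrD. Qed.

Lemma zredM (x y : 'Z_a) : zred b (x * y) = zred b x * zred b y.
Proof. by rewrite -[x]natr_Zp -[y]natr_Zp -natrM !zred_nat natrM. Qed.

Lemma zred0 : zred b (0 : 'Z_a) = 0.
Proof. by rewrite -(mulr0n 1) zred_nat. Qed.

Lemma zred_sum I (r : seq I) (P : pred I) (F : I -> 'Z_a) :
  zred b (\sum_(i <- r | P i) F i) = \sum_(i <- r | P i) zred b (F i).
Proof. exact: (big_morph _ zredD zred0). Qed.

Lemma map_zredM k (M N : 'M['Z_a]_k) :
  map_mx (zred b) (M *m N) = map_mx (zred b) M *m map_mx (zred b) N.
Proof.
apply/matrixP=> i j; rewrite !mxE zred_sum.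
by apply: eq_bigr => l _; rewrite !mxE zredM.
Qed.

Lemma zred_inj : a = b -> injective (zred b : 'Z_a -> 'Z_b).
Proof.
move=> eq_ab x y /(congr1 (@nat_of_ord _)).
have lt_a (z : 'Z_a) : (nat_of_ord z < a)%N.
  by rewrite -[X in (_ < X)%N](Zp_cast a_gt1) ltn_ord.
by rewrite /zred !val_Zp_nat // -eq_ab !modn_small // => /ord_inj.
Qed.

End ZpReduction.

Section ContinuousHomomorphisms.
Local Open Scope classical_set_scope.
Variables (G : topologicalType) (mul : G -> G -> G) (gT hT : finGroupType).
Variables (A : {set gT}) (B : {set hT}) (phi : gT -> hT).
Hypotheses (phiM : {in A &, {morph phi : y z / (y * z)%g}})
           (phiA : forall a, a \in A -> phi a \in B).

(* Post-composition with a homomorphism A -> B of finite groups preserves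
   continuous homomorphisms: a preimage of a point is a union of open fibres. *)
Lemma cont_hom_comp (f : G -> gT) : cont_hom mul A f -> cont_hom mul B (phi \o f).
Proof.
case=> fM fA f_open; split => [y z|y|v] /=; first by rewrite fM phiM.
  exact: phiA.
have -> : (phi \o f) @^-1` [set v] = \bigcup_(a in phi @^-1` [set v]) f @^-1` [set a].
  by apply/seteqP; split => y /= ; [exists (f y) | case=> a /= <- ->].
by apply: bigcup_open => a _; exact: f_open.
Qed.

Lemma Tker_morph (f : G -> gT) x :
  cont_hom mul A f -> Tker mul B x -> phi (f x) = 1%g.
Proof. by move=> hf xB; exact: (xB (phi \o f) (cont_hom_comp hf)). Qed.

Lemma Tker_inj x :
  (forall a, a \in A -> phi a = 1%g -> a = 1%g) -> Tker mul B x -> Tker mul A x.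
Proof.
move=> phi_inj xB f hf; apply: phi_inj; first by case: hf.
exact: Tker_morph hf xB.
Qed.

End ContinuousHomomorphisms.

Section Unitriangular.
Local Open Scope ring_scope.

Definition unitri (R : nzRingType) k (M : 'M[R]_k) :=
  [forall i : 'I_k, forall j : 'I_k, (M i j == (i == j)%:R) || (i < j)%N].

Lemma ord_gt_eqF k (i l : 'I_k) : (l < i)%N -> (i == l) = false.
Proof. by move=> lt_li; apply/negbTE/eqP => eq_il; move: lt_li; rewrite eq_il ltnn. Qed.

Variable R : nzRingType.

Lemma unitriP k (M : 'M[R]_k) :
  reflect (forall i j : 'I_k, (j <= i)%N -> M i j = (i == j)%:R) (unitri M).
Proof.
apply: (iffP forallP) => [h i j le_ji|h i].
  by have /forallP/(_ j) := h i; rewrite ltnNge le_ji orbF => /eqP.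
apply/forallP => j; case: (leqP j i) => [le_ji|]; last by rewrite orbT.
by rewrite h // eqxx.
Qed.

Lemma unitri_mul k (M N : 'M[R]_k) : unitri M -> unitri N -> unitri (M *m N).
Proof.
move=> /unitriP hM /unitriP hN; apply/unitriP => i j le_ji; rewrite mxE (bigD1 i) //=.
rewrite big1 ?addr0 => [|l ne_li]; first by rewrite hM // eqxx mul1r hN.
case: (ltnP l i) => [lt_li|le_il]; first by rewrite hM ?(ltnW lt_li) // ord_gt_eqF // mul0r.
have lt_il : (i < l)%N by rewrite ltn_neqAle le_il andbT; apply: contra ne_li => /eqP/val_inj ->.
by rewrite hN ?(ltnW (leq_ltn_trans le_ji lt_il)) // ord_gt_eqF ?mulr0 // (leq_ltn_trans le_ji).
Qed.

End Unitriangular.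

(* A unitriangular matrix has determinant 1, hence is invertible. *)
Lemma unitri_unit (R : comUnitRingType) k (M : 'M[R]_k) : unitri M -> M \in unitmx.
Proof.
move/unitriP=> hM; rewrite unitmxE -det_tr det_trig.
  by rewrite big1 ?unitr1 // => i _; rewrite mxE hM // eqxx.
apply/is_trig_mxP => i j lt_ij; rewrite mxE hM ?(ltnW lt_ij) //.
by rewrite ord_gt_eqF.
Qed.

Lemma zred_unitri a b k (M : 'M['Z_a]_k) : (1 < a)%N -> (1 < b)%N -> (b %| a)%N ->
  unitri M -> unitri (map_mx (zred b) M).
Proof.
move=> a_gt1 b_gt1 b_dvd_a /unitriP hM; apply/unitriP => i j le_ji.
by rewrite mxE hM // zred_nat.
Qed.

Lemma UnipE m s (u : {'GL_s.+1['Z_m]}) : (u \in Unip m s) = unitri (GLval u).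
Proof. by rewrite inE. Qed.

Section GLMaps.
Local Open Scope ring_scope.

(* A unitriangular matrix viewed as an element of GL (1 for other inputs). *)
Definition mkGL (R : finComUnitRingType) k (M : 'M[R]_k.+1) : {'GL_k.+1[R]} :=
  insubd (1%g : {'GL_k.+1[R]}) M.

Lemma mkGLK (R : finComUnitRingType) k (M : 'M[R]_k.+1) : unitri M -> GLval (mkGL M) = M.
Proof. by move=> uM; rewrite /mkGL insubdK //; exact: unitri_unit. Qed.

Variables (R1 R2 : finComUnitRingType) (k1 k2 : nat).
Variable F : 'M[R1]_k1.+1 -> 'M[R2]_k2.+1.
Hypotheses (F_unitri : forall M, unitri M -> unitri (F M))
           (FM : forall M N, unitri M -> unitri N -> F (M *m N) = F M *m F N).

Definition GLmap (u : {'GL_k1.+1[R1]}) : {'GL_k2.+1[R2]} := mkGL (F (GLval u)).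

Lemma GLmapE u : unitri (GLval u) -> GLval (GLmap u) = F (GLval u).
Proof. by move=> uu; rewrite mkGLK // F_unitri. Qed.

Lemma GLmap_unitri u : unitri (GLval u) -> unitri (GLval (GLmap u)).
Proof. by move=> uu; rewrite GLmapE // F_unitri. Qed.

Lemma GLmapM u v : unitri (GLval u) -> unitri (GLval v) ->
  GLmap (u * v)%g = (GLmap u * GLmap v)%g.
Proof.
move=> uu uv; apply: val_inj; change (GLval (GLmap (u * v)%g) = GLval (GLmap u * GLmap v)%g).
by rewrite GLmapE ?GL_MxE ?unitri_mul // FM // !GLmapE.
Qed.

End GLMaps.

Section DeleteEmbed.
Local Open Scope ring_scope.
Variable R : nzRingType.

Lemma lift_leq n (h : 'I_n.+1) (i j : 'I_n) : (lift h i <= lift h j)%N = (i <= j)%N.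
Proof. rewrite /= /bump; case: (leqP h i); case: (leqP h j) => *; lia. Qed.

Definition delmx k (h : 'I_k.+2) (M : 'M[R]_k.+2) : 'M[R]_k.+1 :=
  \matrix_(i, j) M (lift h i) (lift h j).

Lemma delmx_unitri k h (M : 'M[R]_k.+2) : unitri M -> unitri (delmx h M).
Proof.
move/unitriP=> hM; apply/unitriP => i j le_ji.
by rewrite mxE hM ?lift_leq // (inj_eq (@lift_inj _ h)).
Qed.

(* Deleting the first or the last row and column is multiplicative on
   unitriangular matrices: the deleted index contributes nothing to the
   remaining entries of a product. *)
Lemma delmxM k h (M N : 'M[R]_k.+2) : h = ord0 \/ h = ord_max ->
  unitri M -> unitri N -> delmx h (M *m N) = delmx h M *m delmx h N.
Proof.
move=> hh /unitriP hM /unitriP hN; apply/matrixP => i j; rewrite !mxE.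
rewrite (bigD1_ord h) //=.
have -> : M (lift h i) h * N h (lift h j) = 0.
  case: hh => ->; first by rewrite hM // lift_eqF mul0r.
  rewrite (hN ord_max) ?lift_max ?(ltnW (ltn_ord j)) //.
  by rewrite eq_sym lift_eqF mulr0.
by rewrite add0r; apply: eq_bigr => l _; rewrite !mxE.
Qed.

Lemma corner_liftF k h (i j : 'I_k.+1) : h = ord0 \/ h = ord_max ->
  (lift h i == ord0) && (lift h j == ord_max) = false.
Proof. by case=> ->; rewrite lift_eqF ?andbF. Qed.

(* The corner embedding M |-> diag(1, M). *)
Definition embmx k (M : 'M[R]_k.+1) : 'M[R]_k.+2 :=
  \matrix_(i, j) match unlift ord0 i, unlift ord0 j with
                 | Some i', Some j' => M i' j' | _, _ => (i == j)%:R end.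

Lemma embmx_lift k (M : 'M[R]_k.+1) i j : embmx M (lift ord0 i) (lift ord0 j) = M i j.
Proof. by rewrite mxE !liftK. Qed.

Lemma embmx_unitri k (M : 'M[R]_k.+1) : unitri M -> unitri (embmx M).
Proof.
move/unitriP=> hM; apply/unitriP => i j; rewrite mxE.
case: (unliftP ord0 i) => [i'|] ->; case: (unliftP ord0 j) => [j'|] -> // le_ji.
by rewrite hM ?(inj_eq (@lift_inj _ ord0)) // -(lift_leq ord0).
Qed.

Lemma embmxM k (M N : 'M[R]_k.+1) : embmx (M *m N) = embmx M *m embmx N.
Proof.
apply/matrixP => i j; rewrite !mxE (bigD1_ord ord0) //= !mxE !unlift_none.
case: (unliftP ord0 i) => [i'|] ->; case: (unliftP ord0 j) => [j'|] ->.
- rewrite lift_eqF mul0r add0r mxE; apply: eq_bigr => l _.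
  by rewrite !mxE !liftK.
- rewrite lift_eqF mul0r add0r big1 // => l _; rewrite !mxE !liftK unlift_none.
  by rewrite lift_eqF mulr0.
- rewrite eq_sym lift_eqF mulr0 add0r big1 // => l _; rewrite !mxE liftK unlift_none.
  by rewrite eq_sym lift_eqF mul0r.
- rewrite eqxx mulr1 big1 ?addr0 // => l _; rewrite !mxE liftK unlift_none.
  by rewrite eq_sym lift_eqF mul0r.
Qed.

End DeleteEmbed.

Section CentralElementary.
Local Open Scope ring_scope.
Variables (R : finComUnitRingType) (s : nat) (c : R).
Hypothesis s_gt0 : (0 < s)%N.

(* The elementary matrix I + c E_{1,s+1}; E_{1,s+1} squares to zero, so its
   powers are I + (c m) E_{1,s+1}, and it commutes with every unitriangular
   matrix since it only touches the top right corner. *)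
Local Notation E := (delta_mx ord0 ord_max : 'M[R]_s.+1).
Local Notation elem := (1%:M + c *: E).

Lemma ord_max_eq0F : (ord_max : 'I_s.+1) == ord0 = false.
Proof. by apply/negbTE; rewrite -val_eqE /= -lt0n. Qed.

Lemma corner_sqr0 : E *m E = 0.
Proof. by rewrite mul_delta_mx_cond ord_max_eq0F. Qed.

Lemma elem_exp m : elem ^+ m = 1%:M + (c *+ m) *: E.
Proof.
elim: m => [|m IHm]; first by rewrite expr0 mulr0n scale0r addr0.
rewrite exprS IHm -mulmxE mulmxDl mul1mx mulmxDr mulmx1.
rewrite -scalemxAr -scalemxAl corner_sqr0 !scaler0 addr0 mulrS scalerDl.
by rewrite -addrA [_ + c *: E]addrC.
Qed.

Lemma elem_unitri d : unitri (1%:M + d *: E).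
Proof.
apply/unitriP => i j le_ji; rewrite !mxE.
have /negbTE -> : ~~ ((i == ord0) && (j == ord_max)).
  by apply/andP => -[/eqP ei /eqP ej]; move: le_ji; rewrite ei ej leqNgt s_gt0.
by rewrite mulr0 addr0.
Qed.

Lemma elem_comm (M : 'M[R]_s.+1) : unitri M -> elem *m M = M *m elem.
Proof.
move/unitriP=> hM; rewrite mulmxDl mulmxDr mul1mx mulmx1 -scalemxAl -scalemxAr.
congr (_ + c *: _); apply/matrixP => i j; rewrite !mxE.
rewrite (bigD1 ord_max) //= big1 ?addr0 => [|l ne_l]; last first.
  by rewrite !mxE (negbTE ne_l); case: (_ == _); rewrite /= mul0r.
rewrite (bigD1 ord0) //= big1 ?addr0 => [|l ne_l]; last first.
  by rewrite !mxE (negbTE ne_l) /= mulr0.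
rewrite !mxE !eqxx !andbT hM ?leq_ord //.
by rewrite (hM i ord0) // /= [ord_max == j]eq_sym.
Qed.

Definition elemGL : {'GL_s.+1[R]} := mkGL elem.

Lemma elemGL_val : GLval elemGL = elem.
Proof. by rewrite mkGLK // elem_unitri. Qed.

Lemma elemGL_exp m : GLval (elemGL ^+ m)%g = elem ^+ m.
Proof.
elim: m => [|m IHm]; first by rewrite expg0 expr0.
by rewrite expgS GL_ME IHm elemGL_val exprS.
Qed.

Lemma elemGL_set1 : [set u : {'GL_s.+1[R]} | GLval u == elem] = [set elemGL].
Proof.
apply/setP => u; rewrite !inE; apply/eqP/eqP => [eq_u|->]; last exact: elemGL_val.
by apply: val_inj; rewrite /= -/(GLval u) eq_u -elemGL_val.
Qed.

Lemma elem_cycleP (u : {'GL_s.+1[R]}) :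
  reflect (exists m, GLval u = 1%:M + (c *+ m) *: E) (u \in <[elemGL]>%g).
Proof.
apply: (iffP idP) => [/cycleP [m ->]|[m eq_u]]; first by exists m; rewrite elemGL_exp elem_exp.
by apply/cycleP; exists m; apply: val_inj; rewrite /= -/(GLval u) eq_u -elem_exp -elemGL_exp.
Qed.

(* This cyclic group is centralised, hence normalised, by unitriangular elements. *)
Lemma elem_cycle_norm (A : {set {'GL_s.+1[R]}}) :
  (forall u, u \in A -> unitri (GLval u)) -> A \subset 'N(<[elemGL]>)%g.
Proof.
move=> uA; apply: fintype.subset_trans (cent_sub _); rewrite cent_cycle.
apply/fintype.subsetP => u u_in; apply/cent1P; apply: val_inj.
change (GLval (u * elemGL)%g = GLval (elemGL * u)%g).
by rewrite !GL_MxE elemGL_val elem_comm // uA.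
Qed.

End CentralElementary.

Section QuotientFactor.
Local Open Scope group_scope.
Variables (gT hT : finGroupType) (H : {group gT}) (A : {set gT}) (psi : gT -> hT).
Hypotheses (sHA : H \subset A) (nHA : A \subset 'N(H))
           (mulA : {in A &, forall y z, y * z \in A})
           (psiM : {in A &, {morph psi : y z / y * z}})
           (psiH : {in H, forall h, psi h = 1}).

Definition qfactor (C : coset_of H) : hT := psi (repr C).

Lemma qfactorE u : u \in A -> qfactor (coset H u) = psi u.
Proof.
move=> uA; have uN := fintype.subsetP nHA u uA.
have : repr (coset H u) \in H :* u by rewrite -val_coset // mem_repr_coset.
case/rcosetP => h hH eq_repr; rewrite /qfactor eq_repr psiM ?(fintype.subsetP sHA h hH) //.
by rewrite psiH // mul1g.
Qed.

Lemma qfactorM : {in A / H &, {morph qfactor : C D / C * D}}.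
Proof.
move=> _ _ /morphimP[u uN uA ->] /morphimP[v vN vA ->].
by rewrite -morphM // !qfactorE ?psiM // mulA.
Qed.

Lemma qfactor_in (B : {set hT}) :
  {in A, forall a, psi a \in B} -> forall C, C \in A / H -> qfactor C \in B.
Proof. by move=> psiB _ /morphimP[u uN uA ->]; rewrite qfactorE // psiB. Qed.

Lemma Tker_quotient (G : topologicalType) (mul : G -> G -> G) (B : {set hT}) x f u :
  {in A, forall a, psi a \in B} -> Tker mul B x -> cont_hom mul (A / H) f ->
  u \in A -> f x = coset H u -> psi u = 1.
Proof.
move=> psiB xB hf uA fxu; rewrite -(qfactorE uA) -fxu.
exact: (Tker_morph (phi := qfactor) qfactorM (qfactor_in psiB) hf xB).
Qed.

End QuotientFactor.

Section UnipotentGroups.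
Local Open Scope ring_scope.

Canonical Zsub_group p k s := [group of Zsub p k s].

Lemma Ukmod_gt1 p k s : prime p -> (1 < Ukmod p k s)%N.
Proof. by move=> p_pr; rewrite /Ukmod -{1}(expn0 p) ltn_exp2l ?prime_gt1 // addn1. Qed.

Lemma Ukmod_shift p n s : (s.+1 <= n)%N -> Ukmod p n.-1 s = Ukmod p n s.+1.
Proof. by move=> le_sn; rewrite /Ukmod (_ : (n.-1 - s + 1 = n - s.+1 + 1)%N) //; lia. Qed.

Lemma UgrpE p k s (v : {'GL_s.+1['Z_(Ukmod p k s)]}) :
  (v \in Ugrp p k s) = unitri (GLval v).
Proof. exact: UnipE. Qed.

Lemma Zsub_cycle p k s : (0 < s)%N ->
  Zsub p k s = <[elemGL s ((p ^ (k - s))%:R : 'Z_(Ukmod p k s))]>%g.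
Proof. by move=> s_gt0; rewrite /Zsub elemGL_set1. Qed.

Lemma ZsubP p k s (u : {'GL_s.+1['Z_(Ukmod p k s)]}) : (0 < s)%N ->
  reflect (exists m, GLval u = 1%:M + (p ^ (k - s) * m)%:R *: delta_mx ord0 ord_max)
          (u \in Zsub p k s).
Proof.
move=> s_gt0; rewrite Zsub_cycle //.
by apply: (iffP (elem_cycleP _ s_gt0 u)) => -[m eq_u]; exists m; rewrite eq_u natrM mulr_natr.
Qed.

Lemma Ugrp_mul p k s : {in Ugrp p k s &, forall y z, (y * z)%g \in Ugrp p k s}.
Proof. by move=> y z; rewrite !UgrpE GL_MxE; exact: unitri_mul. Qed.

Lemma Ugrp_norm p k s : (0 < s)%N -> Ugrp p k s \subset 'N(Zsub p k s)%g.
Proof. by move=> s_gt0; rewrite Zsub_cycle // elem_cycle_norm // => u; rewrite UgrpE. Qed.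

Lemma Zsub_sub p k s : (0 < s)%N -> Zsub p k s \subset Ugrp p k s.
Proof.
move=> s_gt0; apply/fintype.subsetP => u /(ZsubP _ s_gt0) [m eq_u].
by rewrite UgrpE eq_u elem_unitri.
Qed.

Lemma Tker_Ubar_factor p k s m k2 (F : 'M['Z_(Ukmod p k s)]_s.+1 -> 'M['Z_m]_k2.+1)
    (G : topologicalType) (mul : G -> G -> G) x f u :
  (0 < s)%N ->
  (forall M, unitri M -> unitri (F M)) ->
  (forall M N, unitri M -> unitri N -> F (M *m N) = F M *m F N) ->
  (forall h, h \in Zsub p k s -> F (GLval h) = 1%:M) ->
  Tker mul (Unip m k2) x -> cont_hom mul (Ubargrp p k s) f ->
  u \in Ugrp p k s -> f x = coset (Zsub p k s) u -> F (GLval u) = 1%:M.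
Proof.
move=> s_gt0 F_unitri FM FZ xB hf uA fxu.
have psiM : {in Ugrp p k s &, {morph GLmap F : y z / (y * z)%g}}.
  by move=> y z; rewrite !UgrpE; exact: GLmapM.
have psiZ : {in Zsub_group p k s, forall h, GLmap F h = 1%g}.
  move=> h hZ; have := fintype.subsetP (Zsub_sub _ _ s_gt0) h hZ; rewrite UgrpE => uh.
  by apply: val_inj; change (GLval (GLmap F h) = GLval 1%g); rewrite GLmapE // FZ.
have psiB : {in Ugrp p k s, forall v, GLmap F v \in Unip m k2}.
  by move=> v; rewrite UgrpE UnipE; exact: GLmap_unitri.
have := Tker_quotient (Zsub_sub _ _ s_gt0) (Ugrp_norm _ _ s_gt0) (@Ugrp_mul p k s)
          psiM psiZ psiB xB hf uA fxu.
by move/(congr1 (@GLval _ _)); rewrite GLmapE // -UgrpE.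
Qed.

End UnipotentGroups.

Section CornerEmbedding.
Local Open Scope ring_scope.

(* The first inclusion: M |-> diag(1, M) followed by the quotient map is an
   injective homomorphism U_{n-1,s} -> Ubar_{n,s+1}, since diag(1, M) lies in
   Z_{n,s+1} only for M = I. *)
Lemma Tker_Ubar_sub_U p n s (G : topologicalType) (mul : G -> G -> G) x :
  prime p -> (0 < s)%N -> (s.+1 <= n)%N ->
  Tker mul (Ubargrp p n s.+1) x -> Tker mul (Ugrp p n.-1 s) x.
Proof.
move=> p_pr s_gt0 le_sn.
have eq_mod := Ukmod_shift p le_sn.
have a_gt1 := Ukmod_gt1 n.-1 s p_pr; have b_gt1 := Ukmod_gt1 n s.+1 p_pr.
have b_dvd_a : (Ukmod p n s.+1 %| Ukmod p n.-1 s)%N by rewrite eq_mod.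
pose F (M : 'M['Z_(Ukmod p n.-1 s)]_s.+1) := embmx (map_mx (zred (Ukmod p n s.+1)) M).
have F_unitri M : unitri M -> unitri (F M).
  by move=> uM; apply/embmx_unitri/zred_unitri.
have FM M N : unitri M -> unitri N -> F (M *m N) = F M *m F N.
  by move=> _ _; rewrite /F map_zredM // embmxM.
have F_U v : v \in Ugrp p n.-1 s -> GLmap F v \in Ugrp p n s.+1.
  by rewrite !UgrpE; exact: GLmap_unitri.
have nZ v : v \in Ugrp p n.-1 s -> GLmap F v \in 'N(Zsub p n s.+1)%g.
  by move=> vU; apply: (fintype.subsetP (Ugrp_norm p n (ltn0Sn s))); exact: F_U.
apply: (Tker_inj (phi := fun v => coset (Zsub p n s.+1) (GLmap F v))).
- move=> u v uU vU /=.
  by rewrite (GLmapM F_unitri FM) -?UgrpE // morphM ?nZ.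
- by move=> u uU; apply/morphimP; exists (GLmap F u); rewrite ?nZ ?F_U.
move=> u uU /(coset_idr (nZ u uU)) /(ZsubP _ (ltn0Sn s)) [m eq_u].
apply: val_inj; apply/matrixP => i j.
have := congr1 (fun M : 'M['Z_(Ukmod p n s.+1)]_s.+2 => M (lift ord0 i) (lift ord0 j)) eq_u.
rewrite GLmapE -?UgrpE // /F embmx_lift !mxE lift_eqF mulr0 addr0.
rewrite (inj_eq (@lift_inj _ ord0)) -[X in _ = X](zred_nat _ _ b_dvd_a) //.
by move/(zred_inj a_gt1 b_gt1 eq_mod) => ->.
Qed.

End CornerEmbedding.

Section ReverseInclusion.
Local Open Scope ring_scope.
Variables (p n t : nat).
Hypotheses (p_pr : prime p) (le_tn : (t.+1 <= n)%N).

Local Notation b := (Ukmod p n t.+1).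
Local Notation e := (n - t.+1)%N.

Lemma Ukmod_pred : (t.+1 <= n.-1)%N -> Ukmod p n.-1 t.+1 = (p ^ e)%N.
Proof. by move=> le_tn1; rewrite /Ukmod (_ : (n.-1 - t.+1 + 1 = n - t.+1)%N) //; lia. Qed.

Lemma Ukmod_pred_dvd : (t.+1 <= n.-1)%N -> (Ukmod p n.-1 t.+1 %| b)%N.
Proof. by move=> le_tn1; rewrite Ukmod_pred // /Ukmod dvdn_exp2l // leq_addr. Qed.

Let b_gt1 : (1 < b)%N := Ukmod_gt1 n t.+1 p_pr.
Let c_gt1 : (1 < Ukmod p n.-1 t)%N := Ukmod_gt1 n.-1 t p_pr.
Let r_gt1 : (1 < Ukmod p n.-1 t.+1)%N := Ukmod_gt1 n.-1 t.+1 p_pr.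
Let eq_cb : Ukmod p n.-1 t = b := Ukmod_shift p le_tn.
Let c_dvd_b : (Ukmod p n.-1 t %| b)%N. Proof. by rewrite eq_cb. Qed.

Definition delred (h : 'I_t.+2) (M : 'M['Z_b]_t.+2) : 'M['Z_(Ukmod p n.-1 t)]_t.+1 :=
  delmx h (map_mx (zred (Ukmod p n.-1 t)) M).

Lemma delred_unitri h M : unitri M -> unitri (delred h M).
Proof. by move=> uM; apply/delmx_unitri/zred_unitri. Qed.

Lemma delredM h M N : h = ord0 \/ h = ord_max -> unitri M -> unitri N ->
  delred h (M *m N) = delred h M *m delred h N.
Proof. by move=> hh uM uN; rewrite /delred map_zredM // delmxM // zred_unitri. Qed.

Lemma delred_Zsub h v : h = ord0 \/ h = ord_max ->
  v \in Zsub p n t.+1 -> delred h (GLval v) = 1%:M.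
Proof.
move=> hh /(ZsubP _ (ltn0Sn t)) [m ->]; apply/matrixP => i j.
rewrite !mxE corner_liftF // mulr0 addr0 zred_nat //.
by rewrite (inj_eq (@lift_inj _ h)).
Qed.

(* Reduction mod p^e kills Z_{n,t+1}, whose corner entries are multiples of p^e. *)
Lemma zred_Zsub v : (t.+1 <= n.-1)%N -> v \in Zsub p n t.+1 ->
  map_mx (zred (Ukmod p n.-1 t.+1)) (GLval v) = 1%:M.
Proof.
move=> le_tn1 /(ZsubP _ (ltn0Sn t)) [m ->].
have r_dvd_b := Ukmod_pred_dvd le_tn1.
have pe0 : ((p ^ e * m)%:R : 'Z_(Ukmod p n.-1 t.+1)) = 0.
  by apply: ord_inj; rewrite val_Zp_nat // Ukmod_pred // (eqP (dvdn_mulr _ (dvdnn _))).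
apply/matrixP => i j; rewrite !mxE (zredD b_gt1 r_gt1 r_dvd_b) (zredM b_gt1 r_gt1 r_dvd_b).
by rewrite !(zred_nat b_gt1 r_gt1 r_dvd_b) pe0 mul0r addr0.
Qed.

(* A unitriangular u with trivial deletions (when t > 0) and top right entry
   divisible by p^e lies in Z_{n,t+1}: every off-diagonal entry other than the
   corner survives one of the two deletions. *)
Lemma unitri_in_Zsub (v : {'GL_t.+2['Z_b]}) : unitri (GLval v) ->
  ((0 < t)%N -> delred ord0 (GLval v) = 1%:M /\ delred ord_max (GLval v) = 1%:M) ->
  ((p ^ e)%N %| GLval v ord0 ord_max)%N -> v \in Zsub p n t.+1.
Proof.
move=> /unitriP uv del1 dvd_corner; apply/(ZsubP _ (ltn0Sn t)).
exists (GLval v ord0 ord_max %/ p ^ e)%N; apply/matrixP => i j; rewrite !mxE.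
have del_entry h (i' j' : 'I_t.+1) : delred h (GLval v) = 1%:M ->
    GLval v (lift h i') (lift h j') = (lift h i' == lift h j')%:R.
  move/matrixP/(_ i' j'); rewrite !mxE (inj_eq (@lift_inj _ h)) -(zred_nat b_gt1 c_gt1 c_dvd_b).
  exact: zred_inj.
case: (leqP j i) => [le_ji|lt_ij].
  rewrite uv // (_ : (i == ord0) && (j == ord_max) = false) ?mulr0 ?addr0 //.
  by apply/negbTE/andP => -[/eqP ei /eqP ej]; move: le_ji; rewrite ei ej.
case: (boolP ((i == ord0) && (j == ord_max))) => [/andP [/eqP -> /eqP ->] | not_corner].
  rewrite eq_sym ord_max_eq0F // add0r mulr1 mulnC divnK //.
  by rewrite natr_Zp.
rewrite mulr0 addr0.
have t_gt0 : (0 < t)%N.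
  rewrite lt0n; apply: contraNneq not_corner => t0; apply/andP.
  have [i0 jmax] : nat_of_ord i = 0%N /\ nat_of_ord j = t.+1 by have := ltn_ord j; lia.
  by split; apply/eqP/val_inj.
have [del_first del_last] := del1 t_gt0.
case: (eqVneq i ord0) => [ei | ni].
  have nj : j != ord_max by apply: contraNneq not_corner => ->; rewrite ei !eqxx.
  case: (unliftP ord_max i) => [i' ei'|ei']; last by move: lt_ij; rewrite ei' ltnNge leq_ord.
  case: (unliftP ord_max j) => [j' ej'|ej']; last by move: nj; rewrite ej' eqxx.
  by rewrite ei' ej' del_entry.
case: (unliftP ord0 i) => [i' ei'|ei']; last by move: ni; rewrite ei' eqxx.
case: (unliftP ord0 j) => [j' ej'|ej']; last by move: lt_ij; rewrite ej'.
by rewrite ei' ej' del_entry.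
Qed.

Section Witness.
Variables (G : topologicalType) (mul : G -> G -> G) (x : G).
Hypothesis x_in : forall s, (1 <= s <= n.-1)%N -> Tker mul (Ugrp p n.-1 s) x.
Variables (f : G -> coset_of (Zsub p n t.+1)) (u : {'GL_t.+2['Z_b]}).
Hypotheses (hf : cont_hom mul (Ubargrp p n t.+1) f) (uU : u \in Ugrp p n t.+1)
           (fxu : f x = coset (Zsub p n t.+1) u).

(* The two deletions of u are trivial, as x lies in T^{U_{n-1,t}}(G). *)
Lemma delred_witness h : h = ord0 \/ h = ord_max -> (0 < t)%N ->
  delred h (GLval u) = 1%:M.
Proof.
move=> hh t_gt0; have xt : Tker mul (Ugrp p n.-1 t) x by apply: x_in; rewrite t_gt0 /=; lia.
apply: (Tker_Ubar_factor (ltn0Sn t) (@delred_unitri h) _ _ xt hf uU fxu).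
- by move=> M N; exact: delredM.
- by move=> v; exact: delred_Zsub.
Qed.

(* The corner entry of u is divisible by p^e, as x lies in T^{U_{n-1,t+1}}(G). *)
Lemma corner_witness_dvd : ((p ^ e)%N %| GLval u ord0 ord_max)%N.
Proof.
case: (leqP t.+1 n.-1) => [le_tn1|lt_n1t]; last by rewrite (_ : e = 0%N) ?expn0 ?dvd1n //; lia.
have xt : Tker mul (Ugrp p n.-1 t.+1) x by apply: x_in; rewrite le_tn1.
have r_dvd_b := Ukmod_pred_dvd le_tn1.
have := Tker_Ubar_factor (ltn0Sn t) (fun M => zred_unitri b_gt1 r_gt1 r_dvd_b)
  (fun M N _ _ => map_zredM b_gt1 r_gt1 r_dvd_b M N) (fun v => @zred_Zsub v le_tn1) xt hf uU fxu.
move/matrixP/(_ ord0 ord_max); rewrite !mxE eq_sym ord_max_eq0F //= => /(congr1 (@nat_of_ord _)).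
by rewrite /zred val_Zp_nat // -Ukmod_pred // => /eqP.
Qed.

End Witness.

Lemma Tker_U_sub_Ubar (G : topologicalType) (mul : G -> G -> G) x :
  (forall s, (1 <= s <= n.-1)%N -> Tker mul (Ugrp p n.-1 s) x) ->
  Tker mul (Ubargrp p n t.+1) x.
Proof.
move=> x_in f hf; have [_ fA _] := hf.
have /morphimP [u _ uU fxu] := fA x.
have uu : unitri (GLval u) by rewrite -UgrpE.
rewrite fxu; apply: coset_id; apply: unitri_in_Zsub => //.
  by move=> t_gt0; split; apply: (delred_witness x_in hf uU fxu) => //; [left | right].
exact: (corner_witness_dvd x_in hf uU fxu).
Qed.

End ReverseInclusion.

Local Open Scope classical_set_scope.

Theorem proposition10p1 (p n : nat) (hp : prime p) (hn : (2 <= n)%N)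
    (G : topologicalType) (mul : G -> G -> G) (inv : G -> G) (e : G)
    (hG : is_profinite_group mul inv e) :
  [set x : G | forall s : nat, (1 <= s <= n)%N -> Tker mul (Ubargrp p n s) x] =
  [set x : G | forall s : nat, (1 <= s <= n.-1)%N -> Tker mul (Ugrp p n.-1 s) x].
Proof.
apply/seteqP; split => x /= x_in s /andP [s_ge1 le_s].
-
  have le_sn : (s.+1 <= n)%N by lia.
  by apply: (Tker_Ubar_sub_U hp s_ge1 le_sn); apply: x_in; lia.
-
  case: s s_ge1 le_s => [//|t] _ le_tn.
  exact: (Tker_U_sub_Ubar hp le_tn x_in).
Qed.
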